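(* Let $\mathcal{T}$ be a finite tree, $w:V(\mathcal{T})\to\mathbb{R}_{\ge 0}$ a weight function, and $m=w(\mathcal{T})$. Then $$\mathtt{cent}(\mathcal{T},w)\le 2\cdot\mathtt{OPT}(\mathcal{T},w)-m.$$
   Context: For a subgraph $\mathcal{H}$ of $\mathcal{T}$, $w(\mathcal{H})=\sum_{x\in V(\mathcal{H})}w(x)$; for a subgraph $\mathcal{H}$, $w$ also denotes its restriction to $V(\mathcal{H})$. A search tree (STT) on a tree $\mathcal{T}$ is a rooted tree $T$ with vertex set $V(\mathcal{T})$ defined recursively: its root is an arbitrary vertex $r\in V(\mathcal{T})$, and the children of $r$ are the roots of search trees built on the connected components of $\mathcal{T}-r$ (one per component); a single-vertex tree has only itself as search tree. The cost of $T$ is $\mathtt{cost}_w(T)=\sum_{x}w(x)\cdot\mathtt{depth}_T(x)$, where the root has depth $1$. $\mathtt{OPT}(\mathcal{T},w)$ is the minimum cost over all search trees on $\mathcal{T}$. A vertex $v$ is a centroid of $(\mathcal{T},w)$ if every connected component $\mathcal{H}$ of $\mathcal{T}-v$ satisfies $w(\mathcal{H})\le w(\mathcal{T})/2$. A search tree $T$ is a centroid tree of $(\mathcal{T},w)$ if for every vertex $x$, $x$ is a centroid of $(\mathcal{T}[V(T_x)],w)$, where $T_x$ is the subtree of $T$ rooted at $x$. $\mathtt{cent}(\mathcal{T},w)$ is the maximum cost of a centroid tree of $(\mathcal{T},w)$. *)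

From Stdlib Require List.
From HB Require Import structures.
From mathcomp Require Import all_boot all_order all_algebra.
Set Implicit Arguments. Unset Strict Implicit. Unset Printing Implicit Defensive.
Import Order.TTheory GRing.Theory Num.Theory.
Local Open Scope ring_scope.

Definition is_tree (V : finType) (e : rel V) : Prop :=
  symmetric e /\ irreflexive e /\ (forall x y : V, connect e x y) /\
  (forall c : seq V, uniq c -> (2 < size c)%N -> ~~ cycle e c).

Definition induced (V : finType) (e : rel V) (S : {set V}) : rel V :=
  [rel x y | [&& e x y, x \in S & y \in S]].

Definition comps (V : finType) (e : rel V) (S : {set V}) : {set {set V}} :=
  [set [set y in S | connect (induced e S) x y] | x in S].

Inductive rtree (V : Type) : Type := Node : V -> list (rtree V) -> rtree V.
Arguments Node {V}.

Definition rroot (V : Type) (t : rtree V) : V := let: Node r _ := t in r.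

Fixpoint vseq (V : Type) (t : rtree V) : seq V :=
  match t with
  | Node r ch => r :: (fix f (l : list (rtree V)) : seq V :=
                         match l with nil => [::] | c :: l' => vseq c ++ f l' end) ch
  end.

Definition vset (V : finType) (t : rtree V) : {set V} := [set x in vseq t].

Fixpoint subtrees (V : Type) (t : rtree V) : list (rtree V) :=
  match t with
  | Node r ch => t :: (fix f (l : list (rtree V)) : list (rtree V) :=
                         match l with nil => nil | c :: l' => subtrees c ++ f l' end) ch
  end.

Inductive is_stt (V : finType) (e : rel V) : {set V} -> rtree V -> Prop :=
| stt_node (S : {set V}) (r : V) (ch : list (rtree V)) :
    r \in S ->
    perm_eq [seq vset c | c <- ch] (enum (comps e (S :\ r))) ->
    (forall c, List.In c ch -> is_stt e (vset c) c) ->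
    is_stt e S (Node r ch).

Fixpoint costd (V : Type) (R : nmodType) (mul : R -> nat -> R) (w : V -> R)
    (t : rtree V) (k : nat) : R :=
  match t with
  | Node r ch => mul (w r) k +
      (fix f (l : list (rtree V)) : R :=
         match l with nil => 0 | c :: l' => costd mul w c k.+1 + f l' end) ch
  end.

Definition cost (V : Type) (R : realFieldType) (w : V -> R) (t : rtree V) : R :=
  costd (fun a k => a * k%:R) w t 1.

Definition wsum (V : finType) (R : realFieldType) (w : V -> R) (H : {set V}) : R :=
  \sum_(x in H) w x.

Definition is_centroid (V : finType) (R : realFieldType) (e : rel V) (w : V -> R)
    (S : {set V}) (v : V) : Prop :=
  v \in S /\ forall H, H \in comps e (S :\ v) -> wsum w H <= wsum w S / 2%:R.

Definition is_centroid_tree (V : finType) (R : realFieldType) (e : rel V) (w : V -> R)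
    (t : rtree V) : Prop :=
  is_stt e [set: V] t /\
  forall s, List.In s (subtrees t) -> is_centroid e w (vset s) (rroot s).

From mathcomp Require Import all_boot all_order all_algebra.
From mathcomp Require Import ring lra.
Import Order.TTheory GRing.Theory Num.Theory.
Set Implicit Arguments. Unset Strict Implicit. Unset Printing Implicit Defensive.
Local Open Scope ring_scope.

(* The cost of a search tree is the sum, over its subtrees s, of the weight
   of V(s).  A search tree T on the whole tree induces a search tree on every
   connected vertex set S, of cost F(T, S) = sum over the subtrees s of T
   rooted in S of w(V(s) /\ S).  By induction on a centroid tree C of T[S]
   with root c, cost C <= 2 F(T, S) - w(S); the induction step amounts to
   w(c) + w(S) <= 2 (F(T, S) - sum_H F(T, H)), H ranging over the components
   of T[S] - c.  This gap is a sum of nonnegative terms, one per subtree s of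
   T rooted in S, equal to the weight of V(s) /\ S minus the component
   containing the root of s.  The subtree of T containing all of S contributes
   at least w(S) / 2 because c is a centroid, and the subtree rooted at c
   contributes at least w(c). *)

Section RootedTrees.

Variable V : Type.

(* The generated [rtree_ind] gives no induction hypothesis for the children. *)
Fixpoint rtree_list_ind (P : rtree V -> Prop)
  (H : forall r ch, (forall c, List.In c ch -> P c) -> P (Node r ch)) (t : rtree V) : P t :=
  match t with
  | Node r ch => H r ch ((fix g (l : list (rtree V)) : forall c, List.In c l -> P c :=
       match l with
       | nil => fun c (hin : List.In c nil) => False_ind _ hin
       | c0 :: l' => fun c hin => match hin with
                     | or_introl E => eq_ind c0 P (rtree_list_ind H c0) c E
                     | or_intror h => g l' c h end
       end) ch)
  end.

Lemma vseq_node (r : V) ch : vseq (Node r ch) = r :: flatten (map (@vseq V) ch).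
Proof. by rewrite /=; congr (_ :: _); elim: ch => //= c ch ->. Qed.

Lemma subtrees_node (r : V) ch :
  subtrees (Node r ch) = Node r ch :: flatten (map (@subtrees V) ch).
Proof. by rewrite /=; congr (_ :: _); elim: ch => //= c ch ->. Qed.

Lemma costd_node (R : nmodType) (mul : R -> nat -> R) (w : V -> R) r ch k :
  costd mul w (Node r ch) k = mul (w r) k + \sum_(c <- ch) costd mul w c k.+1.
Proof. by rewrite /=; congr (_ + _); elim: ch => [|c ch IH] /=; rewrite ?big_nil ?big_cons ?IH. Qed.

Lemma In_subtrees_child r ch c s :
  List.In c ch -> List.In s (subtrees c) -> List.In s (subtrees (Node r ch : rtree V)).
Proof.
rewrite subtrees_node => Hc Hs; right.
elim: ch Hc => //= a l IH [->|Hc]; apply: List.in_or_app; [by left | right].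
exact: IH.
Qed.

End RootedTrees.

Section ListSums.

Variables (T : Type) (R : numDomainType).

Lemma eq_big_In (l : seq T) (F G : T -> R) :
  (forall c, List.In c l -> F c = G c) -> \sum_(c <- l) F c = \sum_(c <- l) G c.
Proof.
elim: l => [|a l IH] H; rewrite ?big_nil // !big_cons H /=; last by left.
by rewrite IH // => c Hc; apply: H; right.
Qed.

Lemma ler_sum_In (l : seq T) (F G : T -> R) :
  (forall c, List.In c l -> F c <= G c) -> \sum_(c <- l) F c <= \sum_(c <- l) G c.
Proof.
elim: l => [|a l IH] H; rewrite ?big_nil // !big_cons; apply: lerD.
  by apply: H; left.
by apply: IH => c Hc; apply: H; right.
Qed.

Lemma ler_sum_In1 (l : seq T) (F : T -> R) a :
  (forall x, 0 <= F x) -> List.In a l -> F a <= \sum_(x <- l) F x.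
Proof.
move=> F_ge0; elim: l => //= b l IH [->|Ha]; rewrite big_cons.
  by rewrite lerDl sumr_ge0.
by apply: le_trans (IH Ha) _; rewrite lerDr.
Qed.

(* [a] and [b] are told apart by a key rather than by [a != b], since [T] need
   not have decidable equality. *)
Lemma ler_sum_In2 (U : eqType) (key : T -> U) (l : seq T) (F : T -> R) a b :
  (forall x, 0 <= F x) -> List.In a l -> List.In b l -> key a != key b ->
  F a + F b <= \sum_(x <- l) F x.
Proof.
move=> F_ge0 Ha Hb Hab.
pose Fk k x := if key x == k then F x else 0.
have Fk_ge0 k x : 0 <= Fk k x by rewrite /Fk; case: ifP.
have Fk_self x : Fk (key x) x = F x by rewrite /Fk eqxx.
apply: le_trans (_ : \sum_(x <- l) (Fk (key a) x + Fk (key b) x) <= _).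
  rewrite big_split /= -{1}(Fk_self a) -(Fk_self b).
  by apply: lerD; apply: ler_sum_In1.
apply: ler_sum => x _; rewrite /Fk; case: eqVneq => [->|_].
  by rewrite (negbTE Hab) addr0.
by rewrite add0r; case: ifP.
Qed.

End ListSums.

Section Weights.

Variables (V : finType) (R : realFieldType) (w : V -> R).

Definition wseq (l : seq V) := \sum_(x <- l) w x.

Definition wseq_in (l : seq V) (S : {set V}) := \sum_(x <- l | x \in S) w x.

Lemma wseq_node r ch : wseq (vseq (Node r ch)) = w r + \sum_(c <- ch) wseq (vseq c).
Proof. by rewrite vseq_node /wseq big_cons big_flatten big_map. Qed.

Lemma costd_subtrees t k :
  costd (fun a k => a * k%:R) w t k.+1 = k%:R * wseq (vseq t) + \sum_(s <- subtrees t) wseq (vseq s).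
Proof.
elim/rtree_list_ind: t k => r ch IH k.
rewrite costd_node subtrees_node big_cons big_flatten big_map wseq_node.
rewrite (eq_big_In (G := fun c => k.+1%:R * wseq (vseq c) + \sum_(s <- subtrees c) wseq (vseq s)));
  last by move=> c Hc; rewrite IH.
rewrite big_split /= -mulr_sumr -(addn1 k) natrD; ring.
Qed.

Lemma cost_subtrees t : cost w t = \sum_(s <- subtrees t) wseq (vseq s).
Proof. by rewrite /cost costd_subtrees mul0r add0r. Qed.

Lemma cost_node r ch :
  cost w (Node r ch) = wseq (vseq (Node r ch)) + \sum_(c <- ch) cost w c.
Proof.
rewrite !cost_subtrees subtrees_node big_cons big_flatten big_map.
by congr (_ + _); apply: eq_big_In => c _; rewrite cost_subtrees.
Qed.

Lemma wsum_setD1 (S : {set V}) x : x \in S -> wsum w S = w x + wsum w (S :\ x).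
Proof. exact: big_setD1. Qed.

Lemma wsum_setD (S H : {set V}) :
  H \subset S -> wsum w (S :\: H) = wsum w S - wsum w H.
Proof. by move=> HS; rewrite /wsum [in RHS](big_setID H) /= (setIidPr HS) addrAC subrr add0r. Qed.

Lemma wseq_in_setID l (S H : {set V}) :
  H \subset S -> wseq_in l S = wseq_in l H + wseq_in l (S :\: H).
Proof.
move=> HS; rewrite /wseq_in (bigID (fun x => x \in H)) /=; congr (_ + _); apply: eq_bigl => x.
  by case: (boolP (x \in H)) => Hx; rewrite ?andbT ?andbF // (subsetP HS).
by rewrite inE andbC.
Qed.

Lemma wseq_in_set0 l : wseq_in l set0 = 0.
Proof. by rewrite /wseq_in big_pred0 // => x; rewrite inE. Qed.

Hypothesis w_ge0 : forall x, 0 <= w x.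

Lemma wseq_in_ge0 l S : 0 <= wseq_in l S.
Proof. exact: sumr_ge0. Qed.

Lemma wseq_in_undup l S : wseq_in (undup l) S <= wseq_in l S.
Proof.
rewrite /wseq_in; elim: l => //= a l IH.
rewrite big_cons; case: ifP => Ha.
  by case: ifP => // _; rewrite -[X in X <= _]add0r lerD.
by rewrite big_cons; case: ifP => // _; rewrite lerD2l.
Qed.

(* [l] may list a vertex several times, hence only an inequality. *)
Lemma wsum_le_wseq_in l (X S : {set V}) :
  X \subset S -> X \subset [set x in l] -> wsum w X <= wseq_in l S.
Proof.
move=> XS Xl; apply: le_trans (_ : wseq_in l X <= _); last first.
  rewrite /wseq_in !(big_mkcond (fun x => x \in _)) /=.
  apply: ler_sum => x _; case: ifP => Hx; first by rewrite (subsetP XS x Hx).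
  by case: ifP.
apply: le_trans (wseq_in_undup _ _).
rewrite /wseq_in -big_filter /wsum -big_enum.
rewrite (perm_big [seq x <- undup l | x \in X] (uniq_perm _ _ _)) //.
- exact: enum_uniq.
- by rewrite filter_uniq // undup_uniq.
move=> x; rewrite mem_enum mem_filter mem_undup.
by case: (boolP (x \in X)) => //= Hx; have := subsetP Xl x Hx; rewrite inE.
Qed.

End Weights.

Section Components.

Variables (V : finType) (e : rel V).

Definition connected_set (S : {set V}) :=
  forall x y, x \in S -> y \in S -> connect (induced e S) x y.

Definition comp_of (S : {set V}) x := [set y in S | connect (induced e S) x y].

Lemma comp_of_subset (S : {set V}) x : comp_of S x \subset S.
Proof. by apply/subsetP => y; rewrite inE => /andP[]. Qed.

Lemma comp_of_notin (S : {set V}) x : x \notin S -> comp_of S x = set0.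
Proof.
move=> xS; apply/setP => y; rewrite !inE; apply/andP => -[yS /connectP[[|b p] /= Hp Ey]].
  by rewrite -Ey yS in xS.
by case/andP: Hp => /and3P[_ xS' _]; rewrite xS' in xS.
Qed.

Lemma comps_subset (S H : {set V}) : H \in comps e S -> H \subset S.
Proof. by case/imsetP => x _ ->; apply: comp_of_subset. Qed.

Lemma connect_comp_of (S : {set V}) x a z :
  a \in comp_of S x -> connect (induced e S) a z -> connect (induced e (comp_of S x)) a z.
Proof.
move=> Ha /connectP[p Hp ->]; elim: p a Hp Ha => [|b p IH] a /=; first by rewrite connect0.
move=> /andP[Hab Hp] Ha.
have Hb : b \in comp_of S x.
  have /and3P[_ _ bS] := Hab.
  move: Ha; rewrite !inE bS => /andP[_ Hxa].
  exact: connect_trans Hxa (connect1 Hab).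
apply: connect_trans (connect1 _) (IH _ Hp Hb).
by rewrite /induced /= Ha Hb (andP Hab).1.
Qed.

Hypothesis e_sym : symmetric e.

Lemma induced_sym (S : {set V}) : symmetric (induced e S).
Proof. by move=> x y; rewrite /induced /= e_sym; case: (x \in S); case: (y \in S); rewrite ?andbT ?andbF. Qed.

Lemma connect_induced_equiv (S : {set V}) : equivalence_rel (connect (induced e S)).
Proof.
move=> x y z; split; first exact: connect0.
move=> Hxy; apply/idP/idP => H.
  by apply: connect_trans H; rewrite (sym_connect_sym (induced_sym S)).
exact: connect_trans Hxy H.
Qed.

Lemma comps_partition (S : {set V}) : partition (comps e S) S.
Proof. by apply: equivalence_partitionP => x y z _ _ _; apply: connect_induced_equiv. Qed.

Lemma cover_comps (S : {set V}) : cover (comps e S) = S.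
Proof. by have /and3P[/eqP -> _ _] := comps_partition S. Qed.

Lemma comp_of_in_comps (S : {set V}) x : x \in S -> comp_of S x \in comps e S.
Proof. by move=> xS; apply/imsetP; exists x. Qed.

Lemma mem_comp_of (S : {set V}) x : x \in S -> x \in comp_of S x.
Proof. by move=> xS; rewrite inE xS connect0. Qed.

Lemma comps_comp_of (S H : {set V}) x : H \in comps e S -> x \in H -> H = comp_of S x.
Proof.
move=> /imsetP[y yS ->]; rewrite inE => /andP[xS Hyx].
apply/setP => z; rewrite !inE; case: (z \in S) => //=.
by case: (connect_induced_equiv S y x z) => _ ->.
Qed.

Lemma comps_connected (S H : {set V}) : H \in comps e S -> connected_set H.
Proof.
move=> HH y z Hy Hz.
have yS : y \in S by apply: (subsetP (comps_subset HH)).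
rewrite (comps_comp_of HH Hy) in Hz *.
apply: connect_comp_of; first exact: mem_comp_of.
by move: Hz; rewrite inE => /andP[].
Qed.

Lemma sum_comps_containing (R : nmodType) (f : {set V} -> R) (S : {set V}) x :
  f set0 = 0 -> \sum_(H in comps e S | x \in H) f H = f (comp_of S x).
Proof.
move=> f0; case: (boolP (x \in S)) => xS; last first.
  rewrite comp_of_notin // f0 big_pred0 // => H; apply/andP => -[HS xH].
  by rewrite (subsetP (comps_subset HS) x xH) in xS.
rewrite (eq_bigl (fun H => H == comp_of S x)) ?big_pred1_eq // => H.
apply/andP/eqP => [[HS xH]|->]; first exact: comps_comp_of.
by rewrite comp_of_in_comps ?mem_comp_of.
Qed.

Lemma wsum_comps (R : realFieldType) (w : V -> R) (S : {set V}) :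
  \sum_(H in comps e S) wsum w H = wsum w S.
Proof.
have /and3P[/eqP cov triv _] := comps_partition S.
by rewrite /wsum -{2}cov big_trivIset.
Qed.

End Components.

Section SearchTrees.

Variables (V : finType) (e : rel V).
Hypothesis e_sym : symmetric e.

Lemma mem_flatten_vseq (ch : seq (rtree V)) x :
  (x \in flatten (map (@vseq V) ch)) = has (fun H : {set V} => x \in H) (map (@vset V) ch).
Proof. by elim: ch => //= c ch IH; rewrite mem_cat IH inE. Qed.

Lemma stt_vset S t : is_stt e S t -> vset t = S.
Proof.
case=> {}S r ch rS chP _.
apply/setP => x; rewrite inE vseq_node in_cons mem_flatten_vseq (perm_has _ chP).
have -> : has (fun H : {set V} => x \in H) (enum (comps e (S :\ r))) = (x \in S :\ r).
  rewrite -{2}(cover_comps e_sym (S :\ r)); apply/hasP/bigcupP => [[H]|[H]].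
    by rewrite mem_enum => H1 H2; exists H.
  by move=> H1 H2; exists H; rewrite ?mem_enum.
by rewrite in_setD1; case: eqVneq => [->|].
Qed.

Lemma stt_child_comp S r ch c :
  is_stt e S (Node r ch) -> List.In c ch -> vset c \in comps e (S :\ r).
Proof.
move=> H Hc; inversion H as [S0 r0 ch0 rS chP chS]; subst.
rewrite -mem_enum -(perm_mem chP).
by elim: (ch) Hc => //= a l IH [->|/IH]; rewrite in_cons ?eqxx // => ->; rewrite orbT.
Qed.

Lemma stt_comp_child S r ch H :
  is_stt e S (Node r ch) -> H \in comps e (S :\ r) -> exists2 c, List.In c ch & vset c = H.
Proof.
move=> Hst HH; inversion Hst as [S0 r0 ch0 rS chP chS]; subst.
move: HH; rewrite -mem_enum -(perm_mem chP).
elim: (ch) => //= a l IH; rewrite in_cons => /orP[/eqP->|/IH [c Hc1 Hc2]].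
  by exists a; [left|].
by exists c; [right|].
Qed.

Lemma stt_sum_children (R : nmodType) S r ch (f : {set V} -> R) :
  is_stt e S (Node r ch) -> \sum_(c <- ch) f (vset c) = \sum_(H in comps e (S :\ r)) f H.
Proof.
move=> Hst; inversion Hst as [S0 r0 ch0 rS chP chS]; subst.
by rewrite -(big_map (@vset V) xpredT f) (perm_big _ chP) big_enum.
Qed.

Lemma stt_wseq (R : realFieldType) (w : V -> R) S t :
  is_stt e S t -> wseq w (vseq t) = wsum w S.
Proof.
elim=> {}S r ch rS chP chS IH.
rewrite wseq_node (eq_big_In (G := fun c => wsum w (vset c))); last by move=> c Hc; apply: IH.
rewrite (stt_sum_children _ (stt_node rS chP chS)) wsum_comps //.
by rewrite (wsum_setD1 w rS).
Qed.

(* The root of [s] is the highest vertex of [S] in [t]. *)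
Lemma stt_top_subtree S' t (S : {set V}) x0 : is_stt e S' t ->
  S \subset S' -> connected_set e S -> x0 \in S ->
  exists2 s, List.In s (subtrees t) & rroot s \in S /\ S \subset vset s.
Proof.
move=> Ht; elim: Ht S => {}S' r ch rS' chP chS IH S SS' Sconn x0S.
have Ht := stt_node rS' chP chS.
case: (boolP (r \in S)) => rS.
  exists (Node r ch); first by rewrite subtrees_node; left.
  by rewrite (stt_vset Ht).
have SS'r : S \subset S' :\ r.
  apply/subsetP => y yS; rewrite in_setD1 (subsetP SS') // andbT.
  by apply: contraNneq rS => <-.
have x0S'r : x0 \in S' :\ r by apply: (subsetP SS'r).
have [c Hc Hvc] := stt_comp_child Ht (comp_of_in_comps e x0S'r).
have Sc : S \subset vset c.
  rewrite Hvc; apply/subsetP => y yS; rewrite inE (subsetP SS'r) //=.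
  apply: connect_sub (Sconn _ _ x0S yS) => u v Huv; apply: connect1.
  move: Huv; rewrite /induced /= => /and3P[-> uS vS].
  by rewrite !(subsetP SS'r).
have [s Hs HsS] := IH c Hc S Sc Sconn x0S.
by exists s => //; apply: In_subtrees_child Hc Hs.
Qed.

End SearchTrees.

Section RestrictedCost.

Variables (R : realFieldType) (V : finType) (e : rel V) (w : V -> R) (T : rtree V).
Hypothesis e_sym : symmetric e.

(* The cost of the search tree that [T] induces on [S], in which the depth of
   [x] is the number of ancestors of [x] in [T] that lie in [S]. *)
Definition restricted_cost (S : {set V}) :=
  \sum_(s <- subtrees T | rroot s \in S) wseq_in w (vseq s) S.

Lemma restricted_cost_setT : restricted_cost [set: V] = cost w T.
Proof.
rewrite cost_subtrees /restricted_cost; under eq_bigl do rewrite in_setT.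
by apply: eq_bigr => s _; rewrite /wseq_in; under eq_bigl do rewrite in_setT.
Qed.

Lemma sum_restricted_cost_comps (D : {set V}) :
  \sum_(H in comps e D) restricted_cost H =
  \sum_(s <- subtrees T) wseq_in w (vseq s) (comp_of e D (rroot s)).
Proof.
rewrite /restricted_cost; under eq_bigr do rewrite big_mkcond.
rewrite exchange_big /=; apply: eq_bigr => s _.
by rewrite -big_mkcondr (sum_comps_containing e_sym (f := wseq_in w (vseq s))) ?wseq_in_set0.
Qed.

Lemma restricted_cost_gap (S D : {set V}) : D \subset S ->
  restricted_cost S - \sum_(H in comps e D) restricted_cost H =
  \sum_(s <- subtrees T | rroot s \in S) wseq_in w (vseq s) (S :\: comp_of e D (rroot s)).
Proof.
move=> DS; rewrite sum_restricted_cost_comps (bigID (fun s => rroot s \in S)) /=.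
rewrite [X in - (_ + X)]big1 ?addr0 => [|s rS]; last first.
  by rewrite comp_of_notin ?wseq_in_set0 //; apply: contra rS; apply: (subsetP DS).
rewrite /restricted_cost -sumrB; apply: eq_bigr => s _.
have compS : comp_of e D (rroot s) \subset S := subset_trans (comp_of_subset _ _ _) DS.
by rewrite (wseq_in_setID _ _ compS) addrC addKr.
Qed.

Hypothesis w_ge0 : forall x, 0 <= w x.
Hypothesis T_stt : is_stt e [set: V] T.

(* The subtree of [T] containing [S] contributes at least [w(S) / 2], the
   subtree rooted at [c] at least [w(c)]; they coincide only if [c] is the
   highest vertex of [S], and then the former contributes [w(S)]. *)
Lemma centroid_restricted_gap (S : {set V}) c : connected_set e S -> c \in S ->
  (forall H, H \in comps e (S :\ c) -> wsum w H <= wsum w S / 2%:R) ->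
  w c + wsum w S <=
  2%:R * \sum_(s <- subtrees T | rroot s \in S) wseq_in w (vseq s) (S :\: comp_of e (S :\ c) (rroot s)).
Proof.
move=> Sconn cS centroid_c.
pose d s := if rroot s \in S then wseq_in w (vseq s) (S :\: comp_of e (S :\ c) (rroot s)) else 0.
have d_ge0 s : 0 <= d s by rewrite /d; case: ifP => // _; apply: wseq_in_ge0.
rewrite (big_mkcond (fun s => rroot s \in S)) -/(\sum_(s <- _) d s).
have [s0 s0T [r0S Ss0]] := stt_top_subtree e_sym T_stt (subsetT S) Sconn cS.
have conn_c : connected_set e [set c].
  by move=> x y; rewrite !inE => /eqP-> /eqP->; apply: connect0.
have [sc scT [/set1P rc cSc]] := stt_top_subtree e_sym T_stt (subsetT _) conn_c (set11 c).
set H0 := comp_of e (S :\ c) (rroot s0).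
have H0S : H0 \subset S := subset_trans (comp_of_subset _ _ _) (subsetDl _ _).
have d_s0 : wsum w S - wsum w H0 <= d s0.
  rewrite /d r0S -wsum_setD //; apply: wsum_le_wseq_in => //.
  by apply: subset_trans (subsetDl _ _) _; rewrite -/(vset s0).
have d_sc : w c <= d sc.
  have -> : w c = wsum w [set c] by rewrite /wsum big_set1.
  rewrite /d rc cS; apply: wsum_le_wseq_in => //.
  rewrite sub1set inE cS andbT; apply: contraT; rewrite negbK.
  by move/(subsetP (comp_of_subset _ _ _)); rewrite !inE eqxx.
have wc_le : w c <= wsum w S by rewrite (wsum_setD1 w cS) lerDl sumr_ge0.
case: (eqVneq (rroot s0) c) => r0c.
  have H0_0 : H0 = set0 by rewrite /H0 r0c comp_of_notin // !inE eqxx.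
  have := ler_sum_In1 d_ge0 s0T.
  by move: d_s0; rewrite H0_0 {2}/wsum big_set0; lra.
have := centroid_c _ (comp_of_in_comps e (_ : rroot s0 \in S :\ c)).
rewrite -/H0 in_setD1 r0c r0S => /(_ isT) H0_le.
have := ler_sum_In2 (key := @rroot V) d_ge0 s0T scT; rewrite rc => /(_ r0c).
have := w_ge0 c; lra.
Qed.

Lemma centroid_cost_le (S : {set V}) C : is_stt e S C ->
  (forall s, List.In s (subtrees C) -> is_centroid e w (vset s) (rroot s)) ->
  connected_set e S -> cost w C <= 2%:R * restricted_cost S - wsum w S.
Proof.
elim=> {}S c ch cS chP chS IH centroids Sconn.
have HC := stt_node cS chP chS.
have [_ centroid_c] : is_centroid e w (vset (Node c ch)) c.
  by apply: (centroids (Node c ch)); rewrite subtrees_node; left.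
rewrite (stt_vset e_sym HC) in centroid_c.
have IHch : \sum_(Ci <- ch) cost w Ci <=
            \sum_(H in comps e (S :\ c)) (2%:R * restricted_cost H - wsum w H).
  rewrite -(stt_sum_children (fun H => 2%:R * restricted_cost H - wsum w H) HC).
  apply: ler_sum_In => Ci Ci_ch; apply: IH => //.
    by move=> s Hs; apply: centroids; apply: In_subtrees_child Ci_ch Hs.
  exact: (comps_connected e_sym (stt_child_comp HC Ci_ch)).
move: IHch; rewrite sumrB -mulr_sumr wsum_comps // (wsum_setD1 w cS).
have := restricted_cost_gap (subsetDl S [set c]).
have := centroid_restricted_gap Sconn cS centroid_c.
rewrite cost_node (stt_wseq e_sym w HC) (wsum_setD1 w cS).
lra.
Qed.

End RestrictedCost.

Theorem theorem1 (R : realFieldType) (V : finType) (e : rel V) (w : V -> R) :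
  is_tree e -> (forall x, 0 <= w x) ->
  forall C T : rtree V, is_centroid_tree e w C -> is_stt e [set: V] T ->
  cost w C <= 2%:R * cost w T - wsum w [set: V].
Proof.
move=> [e_sym [_ [e_conn _]]] w_ge0 C T [C_stt C_centroids] T_stt.
have V_conn : connected_set e [set: V].
  move=> x y _ _; rewrite (@eq_connect _ _ e) ?e_conn // => u v.
  by rewrite /induced /= !in_setT !andbT.
rewrite -(restricted_cost_setT w T).
apply: (centroid_cost_le e_sym w_ge0 T_stt C_stt C_centroids V_conn).
Qed.
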